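(* Let $m \geq 4$ be an integer, let $p$ be a prime with $\gcd(p, m) = 1$, and let $n_0$ be a positive integer with $n_0 \equiv 1 \pmod{p}$. Then there are no polynomials $x(\lambda), y(\lambda), z(\lambda)$ with positive integer coefficients such that $$\frac{m}{n_0 + p\lambda} = \frac{1}{x(\lambda)} + \frac{1}{y(\lambda)} + \frac{1}{z(\lambda)}$$ holds identically in $\lambda$.
   Context: $\lambda$ is an indeterminate. *)

From HB Require Import structures.
From mathcomp Require Import all_boot all_order all_algebra.
Set Implicit Arguments. Unset Strict Implicit. Unset Printing Implicit Defensive.
Import Order.TTheory GRing.Theory Num.Theory.
Local Open Scope ring_scope.

Definition pos_int_coef_poly (x : {poly int}) : Prop :=
  x != 0 /\ forall i : nat, 0 <= x`_i.

Definition evalQ (x : {poly int}) (l : rat) : rat := (map_poly intr x).[l].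

From HB Require Import structures.
From mathcomp Require Import all_boot all_order all_algebra.
From mathcomp Require Import ring lra zify.
Set Implicit Arguments.
Unset Strict Implicit.
Unset Printing Implicit Defensive.
Import Order.TTheory GRing.Theory Num.Theory.
Local Open Scope ring_scope.

(* Write n0 = 1 + p k; then L = n0 + p*lambda equals 1 at lambda = -k.
   Clearing denominators gives m x y z = L (x y + y z + z x).  Comparing
   degrees, the denominator x of least degree is linear, and so is the next
   one, y: otherwise m x - L would be constant, i.e. m x_1 = p, impossible since
   m >= 4 is coprime to the prime p.  At lambda = -k the identity becomes
   m x y z = x y + y z + z x in the integers, so if no denominator vanishes
   there, m = 1/x + 1/y + 1/z <= 3.  Otherwise at least two of them vanish at
   -k, among them x or y.  After cancelling the common factor lambda + k, the
   reduced identity F G = H has a right-hand side H that is positive on an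
   interval starting at -k, while a factor of degree at most 1 changes sign on
   that interval and hence vanishes inside it. *)

(* [c / L = 1/X + 1/Y + 1/Z] with the denominators cleared. *)
Definition egyptian3 {R : comNzRingType} (c : R) (L X Y Z : {poly R}) : Prop :=
  c%:P * (X * Y * Z) = L * (X * Y + Y * Z + Z * X).

Section Symmetry.
Variables (R : comNzRingType) (c : R) (L : {poly R}).

Lemma egyptian3_swapXY X Y Z : egyptian3 c L X Y Z -> egyptian3 c L Y X Z.
Proof. by rewrite /egyptian3 => E; rewrite (mulrC Y X) E; ring. Qed.

Lemma egyptian3_swapYZ X Y Z : egyptian3 c L X Y Z -> egyptian3 c L X Z Y.
Proof. by rewrite /egyptian3 => E; rewrite mulrAC E; ring. Qed.

End Symmetry.

Section FormalIdentity.
Variable R : numFieldType.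

Lemma poly_eq0_horner (P : {poly R}) : (forall t, P.[t] = 0) -> P = 0.
Proof.
move=> P0; apply: (@roots_geq_poly_eq0 _ P [seq i%:R | i <- iota 0 (size P)]).
- by apply/allP => _ /mapP[i _ ->]; rewrite /root P0.
- by rewrite map_inj_uniq ?iota_uniq //; exact: (mulrIn (oner_neq0 _)).
- by rewrite size_map size_iota.
Qed.

Lemma egyptian3_of_horner (c : R) (L X Y Z : {poly R}) :
  L * X * Y * Z != 0 ->
  (forall t, L.[t] != 0 -> X.[t] != 0 -> Y.[t] != 0 -> Z.[t] != 0 ->
     c / L.[t] = 1 / X.[t] + 1 / Y.[t] + 1 / Z.[t]) ->
  egyptian3 c L X Y Z.
Proof.
move=> LXYZ_neq0 Ht; apply/eqP; rewrite -subr_eq0; apply/eqP.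
apply: (mulIf LXYZ_neq0); rewrite mul0r; apply: poly_eq0_horner => t.
rewrite !(hornerM, hornerD, hornerN, hornerC).
have [->|] := eqVneq (L.[t] * X.[t] * Y.[t] * Z.[t]) 0; first by rewrite mulr0.
rewrite !mulf_eq0 !negb_or => /andP[/andP[/andP[Lt Xt] Yt] Zt].
have -> : c = (1 / X.[t] + 1 / Y.[t] + 1 / Z.[t]) * L.[t].
  by rewrite -(Ht t) // divfK.
by field; rewrite Xt Yt Zt.
Qed.

End FormalIdentity.

Section NonnegativeCoefficients.
Variable R : realDomainType.
Implicit Types (P Q : {poly R}) (t : R).

Lemma polyOver_nnegD P Q : P \is a polyOver Num.nneg -> Q \is a polyOver Num.nneg ->
  P + Q \is a polyOver Num.nneg.
Proof. exact: (polyOver_addr_closed _).2. Qed.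

Lemma polyOver_nnegM P Q : P \is a polyOver Num.nneg -> Q \is a polyOver Num.nneg ->
  P * Q \is a polyOver Num.nneg.
Proof. exact: polyOver_mulr_2closed. Qed.

Lemma lead_coef_nneg_gt0 P : P \is a polyOver Num.nneg -> P != 0 -> 0 < lead_coef P.
Proof.
move=> /polyOverP P_ge0 P_neq0.
by rewrite lt_def lead_coef_eq0 P_neq0 -nnegrE lead_coefE P_ge0.
Qed.

Lemma horner_nneg_gt0 P t : P \is a polyOver Num.nneg -> P != 0 -> 0 < t -> 0 < P.[t].
Proof.
move=> P_ge0 P_neq0 t_gt0.
have := lead_coef_nneg_gt0 P_ge0 P_neq0; rewrite horner_coef lead_coefE.
have /prednK <- : (0 < size P)%N by rewrite size_poly_gt0.
move=> lead_gt0; rewrite big_ord_recr /=; apply: ltr_wpDl.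
  apply: sumr_ge0 => i _; apply: mulr_ge0; last exact/exprn_ge0/ltW.
  by rewrite -nnegrE (polyOverP P_ge0).
exact: mulr_gt0 lead_gt0 (exprn_gt0 _ t_gt0).
Qed.

Lemma size_nnegD P Q : P \is a polyOver Num.nneg -> Q \is a polyOver Num.nneg ->
  size (P + Q) = maxn (size P) (size Q).
Proof.
move=> P_ge0 Q_ge0.
wlog le_QP : P Q P_ge0 Q_ge0 / (size Q <= size P)%N.
  move=> hw; case/orP: (leq_total (size Q) (size P)) => [|le_PQ]; first exact: hw.
  by rewrite addrC maxnC hw.
apply/eqP; rewrite eqn_leq size_polyD (maxn_idPl le_QP) /=.
have [->|P_neq0] := eqVneq P 0; first by rewrite size_poly0.
have := lead_coef_nneg_gt0 P_ge0 P_neq0; rewrite lead_coefE => lead_gt0.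
have Qn_ge0 : 0 <= Q`_(size P).-1 by rewrite -nnegrE (polyOverP Q_ge0).
have /prednK <- : (0 < size P)%N by rewrite size_poly_gt0.
rewrite ltnNge; apply/negP => /leq_sizeP /(_ _ (leqnn _)) /eqP.
by rewrite coefD gt_eqF // ltr_wpDr.
Qed.

End NonnegativeCoefficients.

Section LinearPolynomials.
Variable R : realFieldType.
Implicit Types (P F G : {poly R}) (t u v : R).

Lemma horner_size_le2 P t : (size P <= 2)%N -> P.[t] = P`_1 * t + P`_0.
Proof.
move=> sP; rewrite {1}(_ : P = P`_1 *: 'X + (P`_0)%:P).
  by rewrite hornerD hornerZ hornerX hornerC.
apply/polyP => -[|[|i]]; rewrite coefD coefZ coefX coefC /= ?mulr0 ?mulr1 ?add0r ?addr0 //.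
by rewrite (leq_sizeP _ _ sP).
Qed.

Lemma size_affine (a b u : R) : (size (a%:P * ('X - u%:P) + b%:P)%R <= 2)%N.
Proof.
apply: leq_trans (size_polyD _ _) _; rewrite geq_max.
rewrite (leq_trans (size_polyC_leq1 _)) // andbT.
apply: leq_trans (size_polyMleq _ _) _; rewrite size_XsubC addn2 /=.
exact: size_polyC_leq1.
Qed.

Lemma size2_root_factor P u : size P = 2 -> root P u -> P = (lead_coef P)%:P * ('X - u%:P).
Proof.
move=> sP /factor_theorem[Q PE].
have Q_neq0 : Q != 0 by apply: contraTneq isT => Q0; move: sP; rewrite PE Q0 mul0r size_poly0.
have /size1_polyC QE : (size Q <= 1)%N.
  by move: sP; rewrite PE size_mul ?polyXsubC_eq0 // size_XsubC addn2 => -[->].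
by rewrite PE QE lead_coefM lead_coefXsubC mulr1 lead_coefC.
Qed.

Lemma linear_root_between P u v : (size P <= 2)%N -> u < v -> P.[u] < 0 < P.[v] ->
  exists2 r, u < r < v & root P r.
Proof.
move=> sP lt_uv /andP[]; have PE t := horner_size_le2 t sP; rewrite !PE.
move: (P`_1 : R) (P`_0 : R) PE => a b PE Pu_lt0 Pv_gt0.
have : 0 < a * (v - u) by rewrite mulrBr subr_gt0 -(ltrD2r b) (lt_trans Pu_lt0).
rewrite pmulr_lgt0 ?subr_gt0 // => a_gt0.
exists (- b / a); last by rewrite /root PE mulrC divfK ?addNr // gt_eqF.
rewrite ltr_pdivlMr // ltr_pdivrMr // -subr_lt0 -(subr_gt0 (- b)) !opprK.
by rewrite !(mulrC _ a) Pu_lt0 Pv_gt0.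
Qed.

Lemma mul_root_between F G u v : (size (F * G)%R <= 3)%N -> u < v ->
  F.[u] < 0 < F.[v] -> G.[u] < 0 < G.[v] -> exists2 r, u < r < v & root (F * G) r.
Proof.
move=> sFG lt_uv Fuv Guv.
have F_neq0 : F != 0 by apply: contraTneq Fuv => ->; rewrite !horner0 ltxx.
have G_neq0 : G != 0 by apply: contraTneq Guv => ->; rewrite !horner0 ltxx.
rewrite size_mul // in sFG.
have [sF|sF] := leqP (size F) 2.
  by have [r ? rootF] := linear_root_between sF lt_uv Fuv; exists r; rewrite // rootM rootF.
have sG : (size G <= 2)%N by move: (size F) (size G) sFG sF => n n'; lia.
by have [r ? rootG] := linear_root_between sG lt_uv Guv; exists r; rewrite // rootM rootG orbT.
Qed.

End LinearPolynomials.

Section DegreeBounds.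
Variable R : realDomainType.
Implicit Types (c : R) (L X Y Z : {poly R}).

Lemma egyptian3_size_min c L X Y Z : c != 0 -> L != 0 ->
  X \is a polyOver Num.nneg -> Y \is a polyOver Num.nneg -> Z \is a polyOver Num.nneg ->
  X != 0 -> Y != 0 -> Z != 0 -> (size X <= size Y)%N -> (size X <= size Z)%N ->
  egyptian3 c L X Y Z -> size X = size L.
Proof.
move=> c_neq0 L_neq0 X_ge0 Y_ge0 Z_ge0 X_neq0 Y_neq0 Z_neq0 le_XY le_XZ E.
have [sY sZ] : (0 < size Y)%N /\ (0 < size Z)%N by rewrite !size_poly_gt0.
have sS : size (X * Y + Y * Z + Z * X) = (size Y + size Z).-1.
  rewrite !size_nnegD ?polyOver_nnegD ?polyOver_nnegM // !size_mul //.
  by move: (size X) (size Y) (size Z) le_XY le_XZ => *; lia.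
have S_neq0 : X * Y + Y * Z + Z * X != 0.
  by rewrite -size_poly_eq0 sS; move: (size Y) (size Z) sY sZ => *; lia.
move: E; rewrite /egyptian3 => /(congr1 (fun P : {poly R} => size P)).
rewrite size_Cmul // !size_mul ?mulf_neq0 // sS.
by move: (size X) (size Y) (size Z) (size L) sY sZ => *; lia.
Qed.

Lemma egyptian3_size_mid c L X Y Z : L != 0 ->
  Y \is a polyOver Num.nneg -> Z \is a polyOver Num.nneg -> X != 0 -> Y != 0 -> Z != 0 ->
  size X = size L -> (size X <= size Y)%N -> (size Y <= size Z)%N ->
  egyptian3 c L X Y Z -> size Y = size X \/ (size (c%:P * X - L)%R < size X)%N.
Proof.
move=> L_neq0 Y_ge0 Z_ge0 X_neq0 Y_neq0 Z_neq0 sXL le_XY le_YZ E.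
set M := c%:P * X - L.
have ME : (Y + Z) * L * X = M * Y * Z.
  apply/eqP; rewrite -subr_eq0; apply/eqP.
  transitivity (L * (X * Y + Y * Z + Z * X) - c%:P * (X * Y * Z)); first by rewrite /M; ring.
  by rewrite E subrr.
have sYZ : size (Y + Z) = size Z by rewrite size_nnegD // (maxn_idPr le_YZ).
have YZ_neq0 : Y + Z != 0 by rewrite -size_poly_eq0 sYZ size_poly_eq0.
have M_neq0 : M != 0.
  apply: contraTneq (mulf_neq0 (mulf_neq0 YZ_neq0 L_neq0) X_neq0) => M0.
  by rewrite ME M0 !mul0r eqxx.
have [sY sZ sM] : [/\ 0 < size Y, 0 < size Z & 0 < size M]%N by rewrite !size_poly_gt0.
move: (congr1 (fun P : {poly R} => size P) ME) le_XY; rewrite !size_mul ?mulf_neq0 // sYZ sXL.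
by move: (size L) (size Y) (size Z) (size M) sY sZ sM => *; lia.
Qed.

End DegreeBounds.

Section VanishingDenominators.
Variables (R : realFieldType) (p u v : R).
Hypotheses (p_gt0 : 0 < p) (lt_uv : u < v).
Local Notation L := (p%:P * ('X - u%:P) + 1).
Implicit Types (c t : R) (X Y Z : {poly R}).

Lemma horner_denom t : L.[t] = p * (t - u) + 1.
Proof. by rewrite hornerD hornerCM hornerXsubC -polyC1 hornerC. Qed.

Lemma size_denom : size L = 2.
Proof. by rewrite size_polyDl size_Cmul ?size_XsubC ?gt_eqF // size_poly1. Qed.

Lemma horner_denom_gt0 t : u <= t -> 0 < L.[t].
Proof.
move=> le_ut; rewrite horner_denom; apply: ltr_wpDl => //.
by rewrite mulr_ge0 ?subr_ge0 // ltW.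
Qed.

Lemma egyptian3_common_rootXY c X Y Z :
  size X = 2 -> size Y = 2 -> 0 < lead_coef X -> 0 < lead_coef Y ->
  X.[u] = 0 -> Y.[u] = 0 -> 0 < Z.[v] -> ~ egyptian3 c L X Y Z.
Proof.
move=> sX sY + + /rootP/(size2_root_factor sX) -> /rootP/(size2_root_factor sY) -> Zv.
move: (lead_coef X) (lead_coef Y) => a g a_gt0 g_gt0 E.
(* Cancelling ['X - u] gives [Z * G = a g L ('X - u)] with [G] linear,
   negative at [u] and, as [Z.[v] > 0], positive at [v]. *)
pose G := (c * a * g - (a + g) * p)%:P * ('X - u%:P) + (- (a + g))%:P.
have ZG : Z * G = (a * g)%:P * (L * ('X - u%:P)).
  apply: (mulIf (negbT (polyXsubC_eq0 u))); apply/eqP; rewrite -subr_eq0; apply/eqP.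
  transitivity (c%:P * (a%:P * ('X - u%:P) * (g%:P * ('X - u%:P)) * Z) -
    L * (a%:P * ('X - u%:P) * (g%:P * ('X - u%:P)) + g%:P * ('X - u%:P) * Z +
         Z * (a%:P * ('X - u%:P)))).
    by rewrite /G !(polyCB, polyCM, polyCD, polyCN); ring.
  by rewrite E subrr.
have ZGt t : Z.[t] * G.[t] = a * g * (L.[t] * (t - u)).
  by rewrite -hornerM ZG hornerCM hornerM hornerXsubC.
have Gu : G.[u] < 0.
  by rewrite /G hornerD hornerCM hornerXsubC hornerC subrr mulr0 add0r oppr_lt0 addr_gt0.
have pos t : u < t -> 0 < a * g * (L.[t] * (t - u)).
  by move=> lt_ut; rewrite !mulr_gt0 ?subr_gt0 ?horner_denom_gt0 // ltW.
have Gv : 0 < G.[v] by rewrite -(pmulr_rgt0 _ Zv) ZGt pos.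
have [r /andP[lt_ur _] /rootP Gr] :=
  linear_root_between (size_affine _ _ _) lt_uv (introT andP (conj Gu Gv)).
by have := pos r lt_ur; rewrite -ZGt Gr mulr0 ltxx.
Qed.

Section CommonRootXZ.
(* With [X = a ('X - u)] and [Z = Z1 ('X - u)], the identity divided by ['X - u]
   reads [Z1 * Q = a L Y]. *)
Variables (c a : R) (Y Z1 : {poly R}).
Hypotheses (a_gt0 : 0 < a) (sY : size Y = 2) (lead_Y_gt0 : 0 < lead_coef Y).
Hypotheses (Yv_gt0 : 0 < Y.[v]) (Z1v_gt0 : 0 < Z1.[v]).
Local Notation Q := ((c * a)%:P * ('X - u%:P) * Y - L * Y - a%:P * L * ('X - u%:P)).
Hypothesis Z1Q : Z1 * Q = a%:P * L * Y.

Let hornerQ t : Q.[t] = c * a * (t - u) * Y.[t] - L.[t] * Y.[t] - a * L.[t] * (t - u).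
Proof. by rewrite !(hornerD, hornerN, hornerM, hornerC, hornerX). Qed.

Let Z1Qt t : Z1.[t] * Q.[t] = a * L.[t] * Y.[t].
Proof. by rewrite -hornerM Z1Q !hornerM hornerC. Qed.

Let Qu : Q.[u] = - Y.[u].
Proof. by rewrite hornerQ horner_denom subrr; ring. Qed.

Let Z1u : Y.[u] != 0 -> Z1.[u] = - a.
Proof.
move=> Yu_neq0; have := Z1Qt u; rewrite Qu horner_denom subrr mulr0 add0r mulr1 => E.
have /eqP : (Z1.[u] + a) * Y.[u] = 0 by rewrite mulrDl -E mulrN addrN.
by rewrite mulf_eq0 (negPf Yu_neq0) orbF addr_eq0 => /eqP.
Qed.

Lemma reduced_egyptian3_Yu_gt0 : 0 < Y.[u] -> False.
Proof.
(* [Z1] and [Q] both change sign on [u, v], where [a L Y] stays positive. *)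
move=> Yu_gt0.
have Yt_gt0 t : u <= t -> 0 < Y.[t].
  move=> le_ut; have: Y.[t] = Y.[u] + lead_coef Y * (t - u).
    by rewrite !horner_size_le2 ?sY // lead_coefE sY; ring.
  by move=> ->; rewrite ltr_wpDr // mulr_ge0 ?subr_ge0 // ltW.
have sZ1Q : (size (Z1 * Q)%R <= 3)%N.
  rewrite Z1Q -mulrA size_Cmul ?gt_eqF // size_mul ?size_denom ?sY //;
  by rewrite -size_poly_eq0 ?size_denom ?sY.
have Z1u_lt0 : Z1.[u] < 0 by rewrite Z1u ?gt_eqF // oppr_lt0.
have Qu_lt0 : Q.[u] < 0 by rewrite Qu oppr_lt0.
have Qv_gt0 : 0 < Q.[v].
  by rewrite -(pmulr_rgt0 _ Z1v_gt0) Z1Qt !mulr_gt0 ?horner_denom_gt0 ?Yt_gt0 // ltW.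
have [r /andP[lt_ur _]] := mul_root_between sZ1Q lt_uv
  (introT andP (conj Z1u_lt0 Z1v_gt0)) (introT andP (conj Qu_lt0 Qv_gt0)).
by rewrite /root hornerM Z1Qt !mulf_eq0 !gt_eqF ?horner_denom_gt0 ?Yt_gt0 // ltW.
Qed.

Lemma reduced_egyptian3_Yu_lt0 : Y.[u] < 0 -> False.
Proof.
(* [Y] and then [Z1] vanish at some [w > u]; cancelling ['X - w] leaves
   [W * Q = a g L], whose factors both change sign on [u, w]. *)
move=> Yu_lt0; have [w /andP[lt_uw _] /rootP Yw] :=
  linear_root_between (eq_leq sY) lt_uv (introT andP (conj Yu_lt0 Yv_gt0)).
have Qw_lt0 : Q.[w] < 0.
  rewrite hornerQ Yw !mulr0 subrr sub0r oppr_lt0.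
  by rewrite !mulr_gt0 ?horner_denom_gt0 ?subr_gt0 // ltW.
have /factor_theorem[W Z1E] : root Z1 w.
  apply/rootP/eqP; have := Z1Qt w; rewrite Yw mulr0 => /eqP.
  by rewrite mulf_eq0 (lt_eqF Qw_lt0) orbF.
have YE := size2_root_factor sY (introT rootP Yw).
have WQ : W * Q = (a * lead_coef Y)%:P * L.
  apply: (mulIf (negbT (polyXsubC_eq0 w))).
  transitivity (a%:P * L * Y); first by rewrite -Z1Q Z1E; ring.
  by rewrite [in LHS]YE polyCM; ring.
have WQt t : W.[t] * Q.[t] = a * lead_coef Y * L.[t] by rewrite -hornerM WQ hornerCM.
have Wu_gt0 : 0 < W.[u].
  have := Z1u (negbT (lt_eqF Yu_lt0)); rewrite Z1E hornerM hornerXsubC => Wu.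
  have uw_lt0 : u - w < 0 by rewrite subr_lt0.
  by rewrite -(nmulr_llt0 _ uw_lt0) Wu oppr_lt0.
have Ww_lt0 : W.[w] < 0.
  have : 0 < W.[w] * Q.[w] by rewrite WQt !mulr_gt0 ?horner_denom_gt0 // ltW.
  by rewrite (nmulr_lgt0 _ Qw_lt0).
have sWQ : (size ((- W) * (- Q))%R <= 3)%N.
  by rewrite mulrNN WQ size_Cmul ?size_denom // mulf_neq0 ?gt_eqF.
have nWuw : (- W).[u] < 0 < (- W).[w].
  by rewrite !hornerN oppr_lt0 oppr_gt0 Wu_gt0 Ww_lt0.
have nQuw : (- Q).[u] < 0 < (- Q).[w].
  by rewrite !hornerN Qu opprK oppr_gt0 Yu_lt0 Qw_lt0.
have [r /andP[lt_ur _]] := mul_root_between sWQ lt_uw nWuw nQuw.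
by rewrite /root mulrNN hornerM WQt !mulf_eq0 !gt_eqF ?horner_denom_gt0 // ltW.
Qed.

End CommonRootXZ.

Lemma egyptian3_common_rootXZ c X Y Z :
  size X = 2 -> size Y = 2 -> 0 < lead_coef X -> 0 < lead_coef Y ->
  X.[u] = 0 -> Y.[u] != 0 -> Z.[u] = 0 -> 0 < Y.[v] -> 0 < Z.[v] -> ~ egyptian3 c L X Y Z.
Proof.
move=> sX sY + lead_Y_gt0 /rootP/(size2_root_factor sX) -> Yu_neq0 /rootP Zu Yv_gt0.
have /factor_theorem[Z1 ->] := Zu; move: (lead_coef X) => a a_gt0.
rewrite hornerM hornerXsubC pmulr_lgt0 ?subr_gt0 // => Z1v_gt0 E.
have Z1Q : Z1 * ((c * a)%:P * ('X - u%:P) * Y - L * Y - a%:P * L * ('X - u%:P)) =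
           a%:P * L * Y.
  apply: (mulIf (negbT (polyXsubC_eq0 u))); apply/eqP; rewrite -subr_eq0; apply/eqP.
  transitivity (c%:P * (a%:P * ('X - u%:P) * Y * (Z1 * ('X - u%:P))) -
    L * (a%:P * ('X - u%:P) * Y + Y * (Z1 * ('X - u%:P)) +
         Z1 * ('X - u%:P) * (a%:P * ('X - u%:P)))).
    by rewrite polyCM; ring.
  by rewrite E subrr.
have [Yu_lt0|Yu_gt0|Yu0] := ltgtP Y.[u] 0.
- exact: reduced_egyptian3_Yu_lt0 a_gt0 sY lead_Y_gt0 Yv_gt0 Z1Q Yu_lt0.
- exact: reduced_egyptian3_Yu_gt0 a_gt0 sY lead_Y_gt0 Z1v_gt0 Z1Q Yu_gt0.
- by rewrite Yu0 eqxx in Yu_neq0.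
Qed.

End VanishingDenominators.

Section NaturalCoefficients.
Variable R : archiRealFieldType.

Lemma polyOver_nat_nneg : {subset polyOver (@Num.nat R) <= polyOver Num.nneg}.
Proof. by apply: polyOverS => x; rewrite nnegrE; exact: natr_ge0. Qed.

Lemma invr_int_le1 (x : R) : x \is a Num.int -> x != 0 -> x^-1 <= 1.
Proof.
move=> x_int x_neq0; apply: le_trans (ler_norm _) _.
by rewrite normfV invf_le1 ?normr_gt0 // norm_intr_ge1.
Qed.

Lemma natr_mul_neq_prime (m p : nat) (x : R) : (1 < m)%N -> prime p -> coprime p m ->
  x \is a Num.nat -> m%:R * x != p%:R.
Proof.
move=> m_gt1 p_prime p_m_coprime /natrP[n ->]; rewrite -natrM eqr_nat; apply/eqP => mn_p.
have m_eq_p : m = p.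
  by apply/(prime_nt_dvdP p_prime (negbT (gtn_eqF m_gt1))); rewrite -mn_p dvdn_mulr.
by move: p_m_coprime; rewrite m_eq_p /coprime gcdnn => /eqP p1; rewrite p1 in p_prime.
Qed.

Variables (m p : nat) (u : R).
Hypotheses (m_gt3 : (3 < m)%N) (p_prime : prime p) (p_m_coprime : coprime p m).
Local Notation L := ((p%:R)%:P * ('X - u%:P) + 1).
Implicit Types X Y Z : {poly R}.

Let p_gt0 : (0 : R) < p%:R. Proof. by rewrite ltr0n prime_gt0. Qed.
Let m_gt1 : (1 < m)%N. Proof. by lia. Qed.

Lemma egyptian3_nat_linear X Y Z :
  X \is a polyOver Num.nat -> Y \is a polyOver Num.nat -> Z \is a polyOver Num.nat ->
  X != 0 -> Y != 0 -> Z != 0 ->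
  (size X <= size Y)%N -> (size X <= size Z)%N -> (size Y <= size Z)%N ->
  egyptian3 m%:R L X Y Z -> size X = 2 /\ size Y = 2.
Proof.
move=> Xn Yn Zn X_neq0 Y_neq0 Z_neq0 le_XY le_XZ le_YZ E.
have [Y_ge0 Z_ge0] := conj (polyOver_nat_nneg Yn) (polyOver_nat_nneg Zn).
have sL : size L = 2 := size_denom u p_gt0.
have L_neq0 : L != 0 by rewrite -size_poly_eq0 sL.
have m_neq0 : (m%:R : R) != 0 by rewrite pnatr_eq0 -lt0n ltnW.
have sX : size X = 2.
  rewrite -sL (egyptian3_size_min m_neq0 L_neq0 (polyOver_nat_nneg Xn) Y_ge0 Z_ge0) //.
split=> //; rewrite -sX in sL.
have [->//|] :=
  egyptian3_size_mid L_neq0 Y_ge0 Z_ge0 X_neq0 Y_neq0 Z_neq0 (esym sL) le_XY le_YZ E.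
rewrite sX => /leq_sizeP/(_ 1%N isT)/eqP.
rewrite coefB coefCM coefD coefCM coefB coefX coefC coef1 subr0 mulr1 addr0 subr_eq0.
by rewrite (negPf (natr_mul_neq_prime m_gt1 p_prime p_m_coprime (polyOverP Xn 1%N))).
Qed.

Lemma no_egyptian3_nat_sorted X Y Z : u \is a Num.int -> u <= 0 ->
  X \is a polyOver Num.nat -> Y \is a polyOver Num.nat -> Z \is a polyOver Num.nat ->
  X != 0 -> Y != 0 -> Z != 0 ->
  (size X <= size Y)%N -> (size X <= size Z)%N -> (size Y <= size Z)%N ->
  ~ egyptian3 m%:R L X Y Z.
Proof.
move=> u_int u_le0 Xn Yn Zn X_neq0 Y_neq0 Z_neq0 le_XY le_XZ le_YZ E.
have [sX sY] := egyptian3_nat_linear Xn Yn Zn X_neq0 Y_neq0 Z_neq0 le_XY le_XZ le_YZ E.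
have gt0_at1 (W : {poly R}) : W \is a polyOver Num.nat -> W != 0 -> 0 < W.[1].
  by move=> /polyOver_nat_nneg W_ge0 W_neq0; exact: horner_nneg_gt0 W_ge0 W_neq0 ltr01.
have [lX lY] : 0 < lead_coef X /\ 0 < lead_coef Y.
  by split; apply: lead_coef_nneg_gt0; rewrite ?polyOver_nat_nneg.
have u_lt1 : u < 1 := le_lt_trans u_le0 ltr01.
have Eu : m%:R * (X.[u] * Y.[u] * Z.[u]) = X.[u] * Y.[u] + Y.[u] * Z.[u] + Z.[u] * X.[u].
  move: E; rewrite /egyptian3 => /(congr1 (horner^~ u)).
  by rewrite !(horner_denom, hornerCM, hornerM, hornerD) subrr mulr0 add0r mul1r.
have [Xu|Xu] := eqVneq X.[u] 0; have [Yu|Yu] := eqVneq Y.[u] 0.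
- exact: (egyptian3_common_rootXY (c := m%:R) p_gt0 u_lt1 sX sY lX lY Xu Yu
          (gt0_at1 _ Zn Z_neq0) E).
- have Zu : Z.[u] = 0.
    apply/eqP; move: Eu; rewrite Xu !(mul0r, mulr0, add0r, addr0) => /esym/eqP.
    by rewrite mulf_eq0 (negPf Yu).
  exact: (egyptian3_common_rootXZ (c := m%:R) p_gt0 u_lt1 sX sY lX lY Xu Yu Zu
          (gt0_at1 _ Yn Y_neq0) (gt0_at1 _ Zn Z_neq0) E).
- have Zu : Z.[u] = 0.
    apply/eqP; move: Eu; rewrite Yu !(mul0r, mulr0, add0r, addr0) => /esym/eqP.
    by rewrite mulf_eq0 (negPf Xu) orbF.
  exact: (egyptian3_common_rootXZ (c := m%:R) p_gt0 u_lt1 sY sX lY lX Yu Xu Zu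
          (gt0_at1 _ Xn X_neq0) (gt0_at1 _ Zn Z_neq0) (egyptian3_swapXY E)).
have Zu : Z.[u] != 0.
  apply: contra_neq (mulf_neq0 Xu Yu) => Zu.
  by move: Eu; rewrite Zu !(mulr0, mul0r, addr0, add0r) => /esym.
have inv_le1 (W : {poly R}) : W \is a polyOver Num.nat -> W.[u] != 0 -> W.[u]^-1 <= 1.
  by move=> Wn; apply: invr_int_le1; rewrite rpred_horner // (polyOverS (@intr_nat _) Wn).
have m_eq : m%:R = X.[u]^-1 + Y.[u]^-1 + Z.[u]^-1.
  apply: (mulIf (mulf_neq0 (mulf_neq0 Xu Yu) Zu)); rewrite Eu.
  by field; rewrite Xu Yu Zu.
have := inv_le1 _ Xn Xu; have := inv_le1 _ Yn Yu; have := inv_le1 _ Zn Zu.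
have : (4 : R) <= m%:R by rewrite (ler_nat R 4 m).
lra.
Qed.

Lemma no_egyptian3_nat_poly X Y Z : u \is a Num.int -> u <= 0 ->
  X \is a polyOver Num.nat -> Y \is a polyOver Num.nat -> Z \is a polyOver Num.nat ->
  X != 0 -> Y != 0 -> Z != 0 -> ~ egyptian3 m%:R L X Y Z.
Proof.
move=> u_int u_le0.
wlog le_XY : X Y / (size X <= size Y)%N.
  move=> hw; case/orP: (leq_total (size X) (size Y)) => [|le_YX]; first exact: hw.
  by move=> Xn Yn Zn X0 Y0 Z0 /egyptian3_swapXY; apply: hw.
wlog le_XZ : X Y Z le_XY / (size X <= size Z)%N.
  move=> hw; case/orP: (leq_total (size X) (size Z)) => [|le_ZX]; first exact: hw.
  move=> Xn Yn Zn X0 Y0 Z0 /egyptian3_swapXY/egyptian3_swapYZ/egyptian3_swapXY.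
  by apply: hw => //; apply: leq_trans le_XY.
wlog le_YZ : Y Z le_XY le_XZ / (size Y <= size Z)%N.
  move=> hw; case/orP: (leq_total (size Y) (size Z)) => [|le_ZY]; first exact: hw.
  by move=> Xn Yn Zn X0 Y0 Z0 /egyptian3_swapYZ; apply: hw.
by move=> Xn Yn Zn X0 Y0 Z0; apply: no_egyptian3_nat_sorted.
Qed.

End NaturalCoefficients.

Theorem corollary4 (m p n0 : nat) :
  (4 <= m)%N -> prime p -> coprime p m -> (0 < n0)%N -> n0 = 1 %[mod p] ->
  ~ (exists x y z : {poly int},
        [/\ pos_int_coef_poly x, pos_int_coef_poly y, pos_int_coef_poly z &
         forall l : rat,
           n0%:R + p%:R * l != 0 -> evalQ x l != 0 -> evalQ y l != 0 ->
           evalQ z l != 0 ->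
           m%:R / (n0%:R + p%:R * l) = 1 / evalQ x l + 1 / evalQ y l + 1 / evalQ z l]).
Proof.
move=> m_ge4 p_prime p_m_coprime _ n0_mod [x [y [z [x_pos y_pos z_pos Exyz]]]].
pose k := (n0 %/ p)%N.
have n0E : n0%:R = p%:R * k%:R + 1 :> rat.
  by rewrite {1}(divn_eq n0 p) n0_mod modn_small ?prime_gt1 // natrD natrM mulrC.
have natP (w : {poly int}) : pos_int_coef_poly w ->
    map_poly intr w \is a polyOver (@Num.nat rat) /\ map_poly (intr : int -> rat) w != 0.
  case=> w_neq0 w_ge0; split; last by rewrite map_poly_eq0_id0 ?intr_eq0 ?lead_coef_eq0.
  by apply/polyOverP => i; rewrite coef_map natrEint intr_int ler0z w_ge0.
have [Xn X_neq0] := natP x x_pos; have [Yn Y_neq0] := natP y y_pos.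
have [Zn Z_neq0] := natP z z_pos.
have k_int : - k%:R \is a @Num.int rat by rewrite rpredN natr_int.
have k_le0 : - k%:R <= 0 :> rat by rewrite oppr_le0 ler0n.
apply: (no_egyptian3_nat_poly m_ge4 p_prime p_m_coprime k_int k_le0 Xn Yn Zn) => //.
apply: egyptian3_of_horner => [|l L_neq0 Xl Yl Zl].
  by rewrite !mulf_neq0 // -size_poly_eq0 size_denom // ltr0n prime_gt0.
have Ll : ((p%:R)%:P * ('X - (- k%:R)%:P) + 1).[l] = n0%:R + p%:R * l.
  by rewrite horner_denom n0E; ring.
by rewrite Ll in L_neq0 *; exact: Exyz.
Qed.
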